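(* Let $k\ge0$ be an integer and $a,b\in\mathbb{C}$ generic (with $b\neq\pm(\tfrac12+j)$ for integers $0\le j<k$, and no lower parameter below a nonpositive integer). Define the polynomial of degree $2k$ in $n$ $$Q_k^{(3)}(n;a;b)=\frac{4^k}{(\tfrac12+b)_k(\tfrac12-b)_k}\sum_{j=0}^{k}\frac{(-n)_j(\tfrac n2+\tfrac a2)_j(-k)_j}{j!}\,\bigl(\tfrac14-\tfrac k2+\tfrac b2-\tfrac n2+j\bigr)_{k-j}\bigl(\tfrac14-\tfrac k2-\tfrac b2-\tfrac n2+j\bigr)_{k-j},$$ i.e. $\frac{4^k(\frac14-\frac k2+\frac b2-\frac n2)_k(\frac14-\frac k2-\frac b2-\frac n2)_k}{(\frac12+b)_k(\frac12-b)_k}\,{}_3F_2\!\left[\begin{smallmatrix}-n,\ \frac n2+\frac a2,\ -k\\ \frac14-\frac k2+\frac b2-\frac n2,\ \frac14-\frac k2-\frac b2-\frac n2\end{smallmatrix}\big|1\right]$. Then, near $x=0$, $${}_3F_2\!\left[\begin{matrix}\tfrac a3,\ \tfrac13+\tfrac a3,\ \tfrac23+\tfrac a3\\ \tfrac34+\tfrac k2+\tfrac a2+\tfrac b2,\ \tfrac34+\tfrac k2+\tfrac a2-\tfrac b2\end{matrix}\,\Big|\,-\frac{27x}{(1-4x)^3}\right]=(1-4x)^a\sum_{n=0}^\infty\frac{(a)_n(\tfrac12-k-b)_n(\tfrac12-k+b)_n}{n!\,(\tfrac34+\tfrac k2+\tfrac a2+\tfrac b2)_n(\tfrac34+\tfrac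 k2+\tfrac a2-\tfrac b2)_n}\,Q_k^{(3)}(n;a;b)\,x^n.$$
   Context: $(c)_n$ denotes the Pochhammer symbol $c(c+1)\cdots(c+n-1)$, $(c)_0=1$; ${}_pF_q$ is the generalized hypergeometric series $\sum_n \frac{\prod(a_i)_n}{n!\prod(b_i)_n}x^n$. *)

From HB Require Import structures.
From mathcomp Require Import all_boot all_order all_algebra.
Set Implicit Arguments. Unset Strict Implicit. Unset Printing Implicit Defensive.
Import Order.TTheory GRing.Theory Num.Theory.
Local Open Scope ring_scope.

Section Defs.
Variable F : fieldType.

Definition poch (c : F) (n : nat) : F := \prod_(i < n) (c + i%:R).

Definition fps := nat -> F.

Definition fps_mul (f g : fps) : fps :=
  fun n => \sum_(i < n.+1) f i * g (n - i)%N.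

Definition fps_one : fps := fun n => if n == 0%N then 1 else 0.

Definition fps_pow (f : fps) (m : nat) : fps := iter m (fps_mul f) fps_one.

(* composition f(g(x)); meaningful (and used only) when g 0 = 0, in which
   case g^m has no terms below x^m, so the finite sum is the full coefficient *)
Definition fps_comp (f g : fps) : fps :=
  fun n => \sum_(m < n.+1) f m * fps_pow g m n.

(* the binomial series (1 - c x)^e = sum_j (-e)_j / j! (c x)^j *)
Definition fps_binom (e c : F) : fps :=
  fun j => poch (- e) j / (j`!)%:R * c ^+ j.

Definition F32 (a1 a2 a3 b1 b2 : F) : fps :=
  fun n => poch a1 n * poch a2 n * poch a3 n /
           ((n`!)%:R * poch b1 n * poch b2 n).

Definition fps_X (c : F) : fps := fun n => if n == 1%N then c else 0.

Definition Q3 (k n : nat) (a b : F) : F :=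
  4 ^+ k / (poch (1/2 + b) k * poch (1/2 - b) k) *
  \sum_(j < k.+1)
    poch (- n%:R) j * poch (n%:R / 2 + a / 2) j * poch (- k%:R) j / (j`!)%:R *
    poch (1/4 - k%:R/2 + b/2 - n%:R/2 + j%:R) (k - j) *
    poch (1/4 - k%:R/2 - b/2 - n%:R/2 + j%:R) (k - j).

End Defs.

From HB Require Import structures.
From mathcomp Require Import all_boot all_order all_algebra.
From mathcomp Require Import ring zify.
From Stdlib Require Import FunctionalExtensionality.
Import Order.TTheory GRing.Theory Num.Theory.
Local Open Scope ring_scope.
Set Implicit Arguments.
Unset Strict Implicit.

(* Comparing coefficients of x^N after dividing by (1 - 4x)^a, the claim becomes, for
   each N, a finite identity: the composition contributes the coefficients of
   (-27x)^m (1 - 4x)^(-3m - a), and the triplication and duplication formulas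
   (a)_(3m) = 27^m (a/3)_m ((a+1)/3)_m ((a+2)/3)_m, (a)_(2m) = 4^m (a/2)_m ((a+1)/2)_m
   turn their sum into a terminating 3F2(-N, A, A + 1/2; c, d | 1) with A = (N + a)/2 and
   c, d the lower parameters.  Since A + (A + 1/2) + 1 - N - c - d = -k, Sheppard's
   transformation (a consequence of Chu-Vandermonde) turns it into the 3F2 defining Q_k^(3).
   The leftover Pochhammer prefactors are products (s + b/2)_n (s - b/2)_n, even in b, and
   they agree by an identity of polynomials in b^2 proved factor by factor. *)

Section BigSums.
Variable V : nmodType.

Lemma big_ord_shrink n m (f : nat -> V) :
  (m <= n)%N -> (forall i, (m <= i < n)%N -> f i = 0) ->
  \sum_(i < n) f i = \sum_(i < m) f i.
Proof.
move=> le_mn f0; rewrite (big_ord_widen n f le_mn).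
rewrite (bigID (fun i : 'I_n => (i < m)%N)) /= [X in _ + X]big1 ?addr0 //.
by move=> i; rewrite -leqNgt => le_mi; apply: f0; rewrite le_mi /=.
Qed.

Lemma big_ord_split_at n m (f : nat -> V) : (m <= n)%N ->
  \sum_(j < n) f j = \sum_(j < m) f j + \sum_(i < n - m) f (m + i)%N.
Proof.
move=> le_mn; rewrite -!(big_mkord xpredT) (big_cat_nat (leq0n m) le_mn) /=.
congr (_ + _); rewrite -{1}(add0n m) big_addn.
by rewrite big_mkord; apply: eq_bigr => i _; rewrite addnC.
Qed.

Lemma exchange_big_triangle n (G : nat -> nat -> V) :
  \sum_(i < n.+1) \sum_(m < (n - i).+1) G i m =
  \sum_(m < n.+1) \sum_(i < (n - m).+1) G i m.
Proof.
have square (H : nat -> nat -> V) i : (i <= n)%N -> \sum_(m < (n - i).+1) H i m =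
    \sum_(m < n.+1) (if (i + m <= n)%N then H i m else 0 : V).
  move=> le_in; rewrite [RHS](@big_ord_shrink n.+1 (n - i).+1
    (fun m => if (i + m <= n)%N then H i m else 0)); last 2 first.
  - lia.
  - by move=> m /andP[? ?]; case: ifP => //; lia.
  by apply: eq_bigr => -[m lt_m] _ /=; case: ifP => //; lia.
under eq_bigr => i _ do rewrite (square G i (ltn_ord i)).
rewrite exchange_big /=; apply: eq_bigr => -[m lt_m] _ /=.
by rewrite (square (fun m i => G i m)) //; under [RHS]eq_bigr do rewrite addnC.
Qed.

End BigSums.

Section BinomialSums.
Variable R : comPzRingType.

Lemma sum_binS n (g : nat -> R) :
  \sum_(m < n.+2) 'C(n.+1, m)%:R * g m =
  \sum_(m < n.+1) 'C(n, m)%:R * (g m + g m.+1).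
Proof.
under [RHS]eq_bigr do rewrite mulrDr.
rewrite big_split /= big_ord_recl [in RHS]big_ord_recl /= !bin0.
under eq_bigr do rewrite binS natrD mulrDl.
rewrite big_split /= -addrA; congr (_ + _); congr (_ + _).
by rewrite big_ord_recr /= bin_small // mul0r addr0.
Qed.

Lemma sum_sign_binS n (g : nat -> R) :
  \sum_(m < n.+2) (-1) ^+ m * 'C(n.+1, m)%:R * g m =
  \sum_(m < n.+1) (-1) ^+ m * 'C(n, m)%:R * (g m - g m.+1).
Proof.
have := sum_binS n (fun m => (-1) ^+ m * g m).
under eq_bigr do rewrite mulrCA mulrA.
by move=> ->; apply: eq_bigr => i _; rewrite exprS; ring.
Qed.

End BinomialSums.

Lemma bin_mul_bin n m i :
  ('C(n, m + i) * 'C(m + i, m) = 'C(n, m) * 'C(n - m, i))%N.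
Proof.
have [le_n|lt_n] := leqP (m + i) n; last first.
  rewrite (bin_small lt_n) mul0n; have [le_mn|lt_nm] := leqP m n.
    by rewrite (@bin_small (n - m) i) ?muln0 //; lia.
  by rewrite bin_small.
apply/eqP; rewrite -(eqn_pmul2r (_ : 0 < m`! * i`! * (n - m - i)`!)%N); last first.
  by rewrite !muln_gt0 !fact_gt0.
have le_mn : (m <= n)%N by lia.
have le_i : (i <= n - m)%N by lia.
have f_mi := bin_fact (leq_addr i m); rewrite addKn in f_mi.
have -> : ('C(n, m + i) * 'C(m + i, m) * (m`! * i`! * (n - m - i)`!) = n`!)%N.
  by rewrite -(bin_fact le_n) -f_mi subnDA; ring.
by rewrite -(bin_fact le_mn) -(bin_fact le_i); apply/eqP; ring.
Qed.

Lemma nat_ind2 (P : nat -> Prop) :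
  P 0%N -> P 1%N -> (forall n, P n -> P n.+2) -> forall n, P n.
Proof.
move=> P0 P1 PSS n; suff: P n /\ P n.+1 by case.
by elim: n => [|n [IH1 IH2]]; split => //; apply: PSS.
Qed.

Section Hypergeometric.
Variable F : fieldType.

Section Pochhammer.
Implicit Types (a b c d e x y : F) (n m j : nat).

Lemma poch0 c : poch c 0 = 1.
Proof. by rewrite /poch big_ord0. Qed.

Lemma pochS c n : poch c n.+1 = poch c n * (c + n%:R).
Proof. by rewrite /poch big_ord_recr. Qed.

Lemma pochSl c n : poch c n.+1 = c * poch (c + 1) n.
Proof.
rewrite /poch big_ord_recl /= addr0; congr (_ * _).
by apply: eq_bigr => i _; rewrite /bump /= add1n; ring.
Qed.

Lemma poch_add c m n : poch c (m + n) = poch c m * poch (c + m%:R) n.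
Proof.
elim: n => [|n IH]; first by rewrite addn0 poch0 mulr1.
by rewrite addnS !pochS IH natrD mulrA addrA.
Qed.

Lemma poch_refl x n : poch x n = (-1) ^+ n * poch (1 - x - n%:R) n.
Proof.
elim: n x => [|n IH] x; first by rewrite !poch0 expr0 mulr1.
rewrite pochSl IH pochS exprS.
have -> : 1 - (x + 1) - n%:R = 1 - x - n.+1%:R by ring.
ring.
Qed.

Lemma poch_oppn n j : poch (- n%:R) j = (-1) ^+ j * (n ^_ j)%:R :> F.
Proof.
elim: j => [|j IH]; first by rewrite poch0 ffactn0 expr0 mulr1.
rewrite pochS IH ffactnSr exprS natrM.
by have [le_jn|lt_nj] := leqP j n; [rewrite natrB //|rewrite ffact_small //]; ring.
Qed.

Lemma poch_neq0 c n : (forall i, (i < n)%N -> c + i%:R != 0) -> poch c n != 0.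
Proof. by move=> h; apply/prodf_neq0 => i _; apply: h. Qed.

Lemma poch_binomial x y n :
  poch (x + y) n = \sum_(i < n.+1) 'C(n, i)%:R * (poch x i * poch y (n - i)).
Proof.
elim: n => [|n IH]; first by rewrite big_ord1 bin0 !poch0 mulr1 mul1r.
rewrite (sum_binS n (fun i => poch x i * poch y (n.+1 - i))) pochS IH big_distrl /=.
apply: eq_bigr => -[i lt_in] _ /=.
by rewrite subSS subSn // !pochS natrB //; ring.
Qed.

Lemma chu_vandermonde j b e :
  \sum_(m < j.+1) (-1) ^+ m * 'C(j, m)%:R * (poch b m * poch (e + m%:R) (j - m))
  = poch (e - b) j.
Proof.
elim: j b e => [|j IH] b e; first by rewrite big_ord1 bin0 !poch0 expr0; ring.
rewrite (sum_sign_binS j (fun m => poch b m * poch (e + m%:R) (j.+1 - m))).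
transitivity ((e + j%:R) * \sum_(m < j.+1) (-1) ^+ m * 'C(j, m)%:R *
      (poch b m * poch (e + m%:R) (j - m))
   - b * \sum_(m < j.+1) (-1) ^+ m * 'C(j, m)%:R *
      (poch (b + 1) m * poch ((e + 1) + m%:R) (j - m))).
  rewrite !big_distrr -sumrB; apply: eq_bigr => -[i lt_ij] _ /=.
  rewrite subSS subSn // pochS pochSl.
  have -> : e + i%:R + (j - i)%:R = e + j%:R by rewrite natrB //; ring.
  have -> : e + i.+1%:R = e + 1 + i%:R by ring.
  ring.
by rewrite !IH pochS (_ : e + 1 - (b + 1) = e - b); [ring | ring].
Qed.

Lemma chu_vandermonde_shift n j b e : (j <= n)%N ->
  \sum_(m < n.+1) (-1) ^+ m * 'C(j, m)%:R * (poch b m * poch (e + m%:R) (n - m))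
  = poch (e + j%:R) (n - j) * poch (e - b) j.
Proof.
move=> le_jn; rewrite (@big_ord_shrink _ _ j.+1 (fun m =>
  (-1) ^+ m * 'C(j, m)%:R * (poch b m * poch (e + m%:R) (n - m)))); last 2 first.
- by [].
- by move=> i /andP[lt_ji _]; rewrite bin_small // mulr0 mul0r.
rewrite -chu_vandermonde big_distrr /=; apply: eq_bigr => -[i lt_ij] _ /=.
have -> : (n - i = (j - i) + (n - j))%N by lia.
rewrite poch_add (_ : e + i%:R + (j - i)%:R = e + j%:R); first ring.
by rewrite natrB //; ring.
Qed.

Lemma vandermonde_bin n m a d : (m <= n)%N ->
  \sum_(j < n.+1) 'C(n, j)%:R * 'C(j, m)%:R * (poch a j * poch (d - a) (n - j))
  = 'C(n, m)%:R * poch a m * poch (d + m%:R) (n - m).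
Proof.
move=> le_mn; rewrite (@big_ord_split_at _ _ m (fun j =>
  'C(n, j)%:R * 'C(j, m)%:R * (poch a j * poch (d - a) (n - j)))); last by lia.
rewrite big1 ?add0r; last by move=> [i lt_im] _ /=; rewrite (bin_small lt_im); ring.
rewrite (_ : n.+1 - m = (n - m).+1)%N; last by lia.
rewrite (_ : d + m%:R = (a + m%:R) + (d - a)); last by ring.
rewrite poch_binomial big_distrr /=; apply: eq_bigr => -[i lt_i] _ /=.
rewrite -natrM bin_mul_bin natrM poch_add (_ : n - (m + i) = n - m - i)%N; last by lia.
ring.
Qed.

End Pochhammer.

Section Sheppard.
Implicit Types (a b c d e x y : F) (n : nat).

(* [(d)_n (e)_n 3F2(-n, a, b; d, e | 1)], written without denominators. *)
Definition cleared3F2 n a b d e :=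
  \sum_(m < n.+1) (-1) ^+ m * 'C(n, m)%:R *
    (poch a m * poch b m * poch (d + m%:R) (n - m) * poch (e + m%:R) (n - m)).

Lemma cleared3F2E n a b d e : cleared3F2 n a b d e =
  \sum_(j < n.+1) 'C(n, j)%:R *
    (poch a j * poch (e - b) j * poch (d - a) (n - j) * poch (e + j%:R) (n - j)).
Proof.
rewrite /cleared3F2.
transitivity (\sum_(m < n.+1) \sum_(j < n.+1)
   ((-1) ^+ m * 'C(n, j)%:R * 'C(j, m)%:R *
     (poch a j * poch (d - a) (n - j)) * (poch b m * poch (e + m%:R) (n - m)))).
  apply: eq_bigr => -[m lt_mn] _ /=.
  transitivity ((\sum_(j < n.+1) 'C(n, j)%:R * 'C(j, m)%:R *
       (poch a j * poch (d - a) (n - j))) * ((-1) ^+ m * (poch b m * poch (e + m%:R) (n - m)))).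
    by rewrite vandermonde_bin //; ring.
  by rewrite big_distrl /=; apply: eq_bigr => j _; ring.
rewrite exchange_big /=; apply: eq_bigr => -[j lt_jn] _ /=.
transitivity ('C(n, j)%:R * (poch a j * poch (d - a) (n - j)) *
  \sum_(m < n.+1) (-1) ^+ m * 'C(j, m)%:R * (poch b m * poch (e + m%:R) (n - m))).
  by rewrite big_distrr /=; apply: eq_bigr => m _; ring.
by rewrite chu_vandermonde_shift //; ring.
Qed.

Lemma poch_reflE x y n : y = 1 - x - n%:R -> poch x n = (-1) ^+ n * poch y n.
Proof. by move=> ->; apply: poch_refl. Qed.

Lemma sign_sqr n : (-1) ^+ n * (-1) ^+ n = 1 :> F.
Proof. by rewrite -exprMn mulrNN mulr1 expr1n. Qed.

(* After rewriting both sides with [cleared3F2E] the sums agree termwise, up to the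
   reflections [(x)_l = (-1)^l (1 - x - l)_l]. *)
Lemma cleared3F2_sheppard n a b c d : cleared3F2 n a b c d =
  \sum_(j < n.+1) (-1) ^+ j * 'C(n, j)%:R *
    (poch a j * poch (a + b - n%:R - c - d + 1) j * poch (c - a) (n - j)
       * poch (d - a) (n - j)).
Proof.
set s := a + b - n%:R - c - d + 1.
transitivity (cleared3F2 n a b d c); first by apply: eq_bigr => i _; ring.
transitivity (cleared3F2 n a s (a - c - n%:R + 1) (a - d - n%:R + 1)); last first.
  apply: eq_bigr => -[j lt_jn] _ /=.
  rewrite (@poch_reflE (c - a) (a - c - n%:R + 1 + j%:R)); last by rewrite natrB //; ring.
  rewrite (@poch_reflE (d - a) (a - d - n%:R + 1 + j%:R)); last by rewrite natrB //; ring.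
  by rewrite -[LHS]mulr1 -[X in _ * X = _](sign_sqr (n - j)); ring.
rewrite !cleared3F2E; apply: eq_bigr => -[j lt_jn] _ /=.
rewrite (_ : a - d - n%:R + 1 - s = c - b); last by rewrite /s; ring.
rewrite (@poch_reflE (a - c - n%:R + 1 - a) (c + j%:R)); last by rewrite natrB //; ring.
rewrite (@poch_reflE (a - d - n%:R + 1 + j%:R) (d - a)); last by rewrite natrB //; ring.
by rewrite -[LHS]mulr1 -[X in _ * X = _](sign_sqr (n - j)); ring.
Qed.

End Sheppard.

Section EvenPochhammer.
Implicit Types (s u v z : F) (n m : nat).

(* At [X = b^2/4], [qpoch s n] becomes [(s + b/2)_n (s - b/2)_n] and [qpoch_half s n]
   the same product with step 1/2.  Working with the factors [z^2 - X], in which [z] and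
   [-z] are interchangeable, turns identities between such products into bookkeeping. *)
Definition qpoly z : {poly F} := (z ^+ 2)%:P - 'X.
Definition qpoch s n := \prod_(i < n) qpoly (s + i%:R).
Definition qpoch_half s n := \prod_(i < n) qpoly (s + i%:R / 2).

Lemma qpoly_eq u v : u = v \/ u = - v -> qpoly u = qpoly v.
Proof. by case=> ->; rewrite /qpoly ?sqrrN. Qed.

Lemma qpoly_neq0 z : qpoly z != 0.
Proof. by rewrite /qpoly -oppr_eq0 opprB -size_poly_eq0 size_XsubC. Qed.

Lemma qpoch_neq0 s n : qpoch s n != 0.
Proof. by apply/prodf_neq0 => i _; apply: qpoly_neq0. Qed.

Lemma qpoch0 s : qpoch s 0 = 1.
Proof. by rewrite /qpoch big_ord0. Qed.

Lemma qpochS s n : qpoch s n.+1 = qpoch s n * qpoly (s + n%:R).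
Proof. by rewrite /qpoch big_ord_recr. Qed.

Lemma qpochSl s n : qpoch s n.+1 = qpoly s * qpoch (s + 1) n.
Proof.
rewrite /qpoch big_ord_recl /= addr0; congr (_ * _).
by apply: eq_bigr => i _; rewrite /bump /= add1n; congr qpoly; ring.
Qed.

Lemma qpoch1 s : qpoch s 1 = qpoly s.
Proof. by rewrite qpochS qpoch0 mul1r addr0. Qed.

Lemma qpoch_add s m n : qpoch s (m + n) = qpoch s m * qpoch (s + m%:R) n.
Proof.
elim: n => [|n IH]; first by rewrite addn0 qpoch0 mulr1.
by rewrite addnS !qpochS IH mulrA natrD addrA.
Qed.

Lemma qpoch_rev s n : qpoch s n = qpoch (1 - s - n%:R) n.
Proof.
elim: n s => [|n IH] s; first by rewrite !qpoch0.
rewrite qpochSl IH qpochS mulrC; congr (qpoch _ _ * _); first by ring.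
by apply: qpoly_eq; right; ring.
Qed.

Lemma qpoch_half0 s : qpoch_half s 0 = 1.
Proof. by rewrite /qpoch_half big_ord0. Qed.

Lemma qpoch_halfS s n : qpoch_half s n.+1 = qpoch_half s n * qpoly (s + n%:R / 2).
Proof. by rewrite /qpoch_half big_ord_recr. Qed.

Lemma qpoch_half1 s : qpoch_half s 1 = qpoly s.
Proof. by rewrite qpoch_halfS qpoch_half0 mul1r mul0r addr0. Qed.

End EvenPochhammer.

Hypothesis char0 : [pchar F] =i pred0.

Lemma natf_neq0 n : (n%:R != 0 :> F) = (0 < n)%N.
Proof. by rewrite (pcharf0P F).1 // -lt0n. Qed.

Ltac field_char0 := field; rewrite ?natf_neq0 ?fact_gt0 //.

Section QuarterIdentities.
Implicit Types (s u v z : F) (n m : nat).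

Lemma qpoch_half_quarter k : qpoch_half (1/4) k = qpoch (1/4 - k%:R/2) k.
Proof.
elim/nat_ind2: k => [||k IH].
- by rewrite qpoch_half0 qpoch0.
- by rewrite qpoch_half1 qpoch1; apply: qpoly_eq; right; field_char0.
rewrite !qpoch_halfS qpochSl qpochS IH.
rewrite (_ : 1/4 - k.+2%:R/2 + 1 = 1/4 - k%:R/2); last by field_char0.
rewrite (@qpoly_eq (1/4 + k%:R/2) (1/4 - k%:R/2 + k%:R)); last by left; field_char0.
rewrite (@qpoly_eq (1/4 + k.+1%:R/2) (1/4 - k.+2%:R/2)); last by right; field_char0.
ring.
Qed.

(* Induction in steps of two, since two half-steps of [qpoch_half] make one step of
   [qpoch]. *)
Lemma qpoch_quarter_identity k N :
  qpoch (3/4 + k%:R/2 - N%:R/2) N * qpoch_half (1/4) k =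
  qpoch_half (1/4 - k%:R/2) N * qpoch (1/4 - k%:R/2 - N%:R/2) k.
Proof.
elim/nat_ind2: N => [||N IH].
- rewrite qpoch0 qpoch_half0 mul1r (mul1r (qpoch _ _)) qpoch_half_quarter.
  by congr qpoch; field_char0.
- rewrite qpoch1 qpoch_half1 (@qpoly_eq _ (1/4 + k%:R/2)); last by left; field_char0.
  rewrite mulrC -qpoch_halfS qpoch_half_quarter qpochS mulrC.
  rewrite (_ : 1/4 - k.+1%:R/2 = 1/4 - k%:R/2 - 1/2); last by field_char0.
  by congr (_ * _); apply: qpoly_eq; right; field_char0.
pose u : F := 3/4 + k%:R/2 - N%:R/2.
pose e : F := 1/4 - k%:R/2 - N%:R/2.
pose s : F := 1/4 - k%:R/2.
rewrite (_ : 3/4 + k%:R/2 - N.+2%:R/2 = u - 1); last by rewrite /u; field_char0.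
rewrite (_ : 1/4 - k%:R/2 - N.+2%:R/2 = e - 1); last by rewrite /e; field_char0.
apply: (mulIf (qpoly_neq0 (e - 1 + k%:R))).
rewrite -[in RHS]mulrA -qpochS [in RHS]qpochSl (_ : e - 1 + 1 = e); last by ring.
rewrite [in LHS]qpochSl (_ : u - 1 + 1 = u); last by ring.
rewrite [qpoch u _.+1]qpochS !qpoch_halfS.
transitivity (qpoly (u - 1) * qpoly (u + N%:R) * qpoly (e - 1 + k%:R) *
   (qpoch u N * qpoch_half (1/4) k)); first by ring.
rewrite IH.
rewrite (@qpoly_eq (u - 1) (s + N%:R/2)); last by right; rewrite /u /s; field_char0.
rewrite (@qpoly_eq (u + N%:R) (e - 1)); last by right; rewrite /u /e; field_char0.
rewrite (@qpoly_eq (e - 1 + k%:R) (s + N.+1%:R/2)); last by right; rewrite /e /s; field_char0.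
ring.
Qed.

Lemma qpoch_quarter_identity_trunc k N j : (j <= N)%N -> (j <= k)%N ->
  qpoch (3/4 + k%:R/2 - N%:R/2) (N - j) * qpoch_half (1/4) k =
  qpoch_half (1/4 - k%:R/2) N * qpoch (1/4 - k%:R/2 - N%:R/2 + j%:R) (k - j).
Proof.
move=> le_jN le_jk.
pose u : F := 3/4 + k%:R/2 - N%:R/2.
pose e : F := 1/4 - k%:R/2 - N%:R/2.
have splitN : qpoch u N = qpoch u (N - j) * qpoch e j.
  rewrite -{1}(subnK le_jN) qpoch_add [qpoch (u + _) j]qpoch_rev.
  by congr (_ * qpoch _ _); rewrite /u /e natrB //; field_char0.
have splitk : qpoch e k = qpoch e j * qpoch (e + j%:R) (k - j).
  by rewrite -qpoch_add subnKC.
have := qpoch_quarter_identity k N; rewrite -/u -/e splitN splitk => id_uv.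
apply: (mulIf (qpoch_neq0 e j)).
by rewrite mulrAC id_uv; ring.
Qed.

Lemma horner_qpoch s b n :
  (qpoch s n).[b ^+ 2 / 4] = poch (s + b / 2) n * poch (s - b / 2) n.
Proof.
elim: n => [|n IH]; first by rewrite qpoch0 !poch0 hornerC mulr1.
rewrite qpochS hornerM IH /qpoly hornerD hornerN hornerC hornerX !pochS.
field_char0.
Qed.

Lemma horner_qpoch_half s b n :
  4 ^+ n * (qpoch_half s n).[b ^+ 2 / 4] = poch (2 * s + b) n * poch (2 * s - b) n.
Proof.
elim: n => [|n IH]; first by rewrite qpoch_half0 !poch0 hornerC !mulr1.
rewrite qpoch_halfS hornerM /qpoly hornerD hornerN hornerC hornerX !pochS exprS.
transitivity (4 * (4 ^+ n * (qpoch_half s n).[b ^+ 2 / 4]) *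
  ((s + n%:R / 2) ^+ 2 - b ^+ 2 / 4)); first by ring.
by rewrite IH; field_char0.
Qed.

Lemma poch_quarter_identity k N j b : (j <= N)%N -> (j <= k)%N ->
  let u : F := 3/4 + k%:R/2 - N%:R/2 in
  let e : F := 1/4 - k%:R/2 - N%:R/2 + j%:R in
  4 ^+ N * (poch (u + b/2) (N - j) * poch (u - b/2) (N - j)) *
    (poch (1/2 + b) k * poch (1/2 - b) k) =
  4 ^+ k * (poch (1/2 - k%:R - b) N * poch (1/2 - k%:R + b) N) *
    (poch (e + b/2) (k - j) * poch (e - b/2) (k - j)).
Proof.
move=> le_jN le_jk u e.
have := congr1 (fun p => 4 ^+ N * 4 ^+ k * p.[b ^+ 2 / 4])
  (qpoch_quarter_identity_trunc le_jN le_jk).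
rewrite /= !hornerM !horner_qpoch -/u -/e => id_b.
have h_k : 4 ^+ k * (qpoch_half (1/4) k).[b ^+ 2 / 4] =
    poch (1/2 + b) k * poch (1/2 - b) k.
  by rewrite horner_qpoch_half; congr (poch _ _ * poch _ _); field_char0.
have h_N : 4 ^+ N * (qpoch_half (1/4 - k%:R/2) N).[b ^+ 2 / 4] =
    poch (1/2 - k%:R + b) N * poch (1/2 - k%:R - b) N.
  by rewrite horner_qpoch_half; congr (poch _ _ * poch _ _); field_char0.
rewrite -h_k (mulrC (poch (_ - b) N)) -h_N.
by rewrite mulrACA id_b; ring.
Qed.

End QuarterIdentities.

Section PowerSeries.
Implicit Types (a c d e : F) (f g : fps F) (m n : nat).

Lemma bin_div_fact n i : (i <= n)%N ->
  'C(n, i)%:R / n`!%:R = (i`!%:R * (n - i)`!%:R)^-1 :> F.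
Proof.
move=> le_in; rewrite -(bin_fact le_in) !natrM.
have := bin_gt0 n i; rewrite le_in -natf_neq0 => bin_neq0.
by field; rewrite bin_neq0 !natf_neq0 !fact_gt0.
Qed.

Lemma fps_binomD e1 e2 c n :
  fps_binom (e1 + e2) c n = fps_mul (fps_binom e1 c) (fps_binom e2 c) n.
Proof.
rewrite /fps_mul /fps_binom opprD poch_binomial !big_distrl /=.
apply: eq_bigr => -[i /= le_in] _.
rewrite (_ : c ^+ n = c ^+ i * c ^+ (n - i)); last by rewrite -exprD subnKC.
transitivity (poch (- e1) i * poch (- e2) (n - i) * (c ^+ i * c ^+ (n - i)) *
  ('C(n, i)%:R / n`!%:R)); first by ring.
by rewrite bin_div_fact //; field_char0.
Qed.

Lemma fps_mulXl c f n :
  fps_mul (fps_X c) f n = if n is n'.+1 then c * f n' else 0.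
Proof.
rewrite /fps_mul; case: n => [|n]; first by rewrite big_ord1 /fps_X mul0r.
rewrite !big_ord_recl /fps_X /= mul0r add0r subn1 big1 ?addr0 // => i _.
by rewrite mul0r.
Qed.

Lemma fps_binom0 c n : fps_binom 0 c n = fps_one F n.
Proof.
rewrite /fps_binom /fps_one oppr0; case: n => [|n].
  by rewrite poch0 expr0 mulr1 fact0 divr1.
by rewrite pochSl !mul0r.
Qed.

Lemma fps_pow_Xbinom c e d m n :
  fps_pow (fps_mul (fps_X c) (fps_binom e d)) m n =
  if (m <= n)%N then c ^+ m * fps_binom (m%:R * e) d (n - m)%N else 0.
Proof.
set g := fps_mul _ _; elim: m n => [|m IH] n.
  by rewrite expr0 mul1r subn0 mul0r fps_binom0.
rewrite /fps_pow iterS -/(fps_pow g m) {1}/fps_mul.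
case: n => [|n]; first by rewrite big_ord1 /g fps_mulXl mul0r.
rewrite big_ord_recl {1}/g fps_mulXl mul0r add0r ltnS.
under eq_bigr => i _ do rewrite /g fps_mulXl IH /= /bump /= add1n subSS add0n.
have [le_mn|lt_nm] := leqP m n; last first.
  by rewrite big1 // => i _; case: ifP => h; [lia | rewrite mulr0].
rewrite (@big_ord_shrink _ n.+1 (n - m).+1 (fun i => c * fps_binom e d i *
   (if (m <= n - i)%N then c ^+ m * fps_binom (m%:R * e) d (n - i - m)%N else 0)));
  last 2 first.
- lia.
- by move=> i le_i; case: ifP => h; [lia | rewrite mulr0].
rewrite subSS (_ : m.+1%:R * e = e + m%:R * e); last by rewrite mulrSr; ring.
rewrite fps_binomD /fps_mul big_distrr /=; apply: eq_bigr => -[i /= lt_i] _.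
by rewrite ifT; [rewrite exprS (_ : n - i - m = n - m - i)%N; [ring | lia] | lia].
Qed.

Lemma poch_triplication a m :
  27 ^+ m * (poch (a/3) m * poch (1/3 + a/3) m * poch (2/3 + a/3) m) = poch a (3 * m).
Proof.
elim: m => [|m IH]; first by rewrite muln0 !poch0 expr0; ring.
rewrite (_ : 3 * m.+1 = 3 * m + 3)%N; last by lia.
rewrite poch_add !pochS poch0 -IH exprS natrM; field_char0.
Qed.

Lemma poch_duplication a m :
  4 ^+ m * (poch (a/2) m * poch ((a + 1)/2) m) = poch a (2 * m).
Proof.
elim: m => [|m IH]; first by rewrite muln0 !poch0 expr0; ring.
rewrite (_ : 2 * m.+1 = 2 * m + 2)%N; last by lia.
rewrite poch_add !pochS poch0 -IH exprS natrM; field_char0.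
Qed.

Lemma poch_oppn_fact n j : poch (- n%:R) j / j`!%:R = (-1) ^+ j * 'C(n, j)%:R :> F.
Proof.
rewrite poch_oppn -bin_ffact natrM -mulrA mulfK //.
by rewrite natf_neq0 fact_gt0.
Qed.


Lemma fps_comp_Xbinom f (S : fps F) c e d a :
  (forall n, S n = \sum_(m < n.+1) f m * c ^+ m * fps_binom (m%:R * e - a) d (n - m)%N) ->
  fps_comp f (fps_mul (fps_X c) (fps_binom e d)) = fps_mul (fps_binom a d) S.
Proof.
move=> S_coef; apply: functional_extensionality => n.
rewrite /fps_comp {2}/fps_mul.
under [RHS]eq_bigr => i _ do rewrite S_coef big_distrr /=.
rewrite (exchange_big_triangle n (fun i m => fps_binom a d i *
  (f m * c ^+ m * fps_binom (m%:R * e - a) d (n - i - m)%N))).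
apply: eq_bigr => -[m /= le_mn] _.
rewrite fps_pow_Xbinom ifT // -[X in fps_binom X](subrKC a).
rewrite fps_binomD /fps_mul !big_distrr /=; apply: eq_bigr => i _.
by rewrite (_ : n - i - m = n - m - i)%N; [ring | lia].
Qed.

End PowerSeries.

Section Q3Coefficients.
Variables (k : nat) (a b : F).
Hypotheses (poch_pb_neq0 : poch (1/2 + b) k != 0) (poch_nb_neq0 : poch (1/2 - b) k != 0).
Hypotheses (c_neq_natN : forall i, 3/4 + k%:R/2 + a/2 + b/2 + i%:R != 0)
           (d_neq_natN : forall i, 3/4 + k%:R/2 + a/2 - b/2 + i%:R != 0).

Local Notation c := (3/4 + k%:R/2 + a/2 + b/2).
Local Notation d := (3/4 + k%:R/2 + a/2 - b/2).
Local Notation A N := (N%:R/2 + a/2).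

Lemma Q3_summand N j :
  4 ^+ N * ((-1) ^+ j * 'C(N, j)%:R *
    (poch (A N) j * poch (- k%:R) j * poch (c - A N) (N - j) * poch (d - A N) (N - j)))
  = poch (1/2 - k%:R - b) N * poch (1/2 - k%:R + b) N *
    (4 ^+ k / (poch (1/2 + b) k * poch (1/2 - b) k) *
     (poch (- N%:R) j * poch (A N) j * poch (- k%:R) j / j`!%:R *
      poch (1/4 - k%:R/2 + b/2 - N%:R/2 + j%:R) (k - j) *
      poch (1/4 - k%:R/2 - b/2 - N%:R/2 + j%:R) (k - j))).
Proof.
have [lt_Nj|le_jN] := ltnP N j.
  by rewrite bin_small // (poch_oppn N) ffact_small //; ring.
have [lt_kj|le_jk] := ltnP k j.
  by rewrite (poch_oppn k) ffact_small //; ring.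
set u : F := 3/4 + k%:R/2 - N%:R/2.
set e : F := 1/4 - k%:R/2 - N%:R/2 + j%:R.
rewrite (_ : c - A N = u + b/2); last by rewrite /u; field_char0.
rewrite (_ : d - A N = u - b/2); last by rewrite /u; field_char0.
rewrite (_ : 1/4 - k%:R/2 + b/2 - N%:R/2 + j%:R = e + b/2); last by rewrite /e; field_char0.
rewrite (_ : 1/4 - k%:R/2 - b/2 - N%:R/2 + j%:R = e - b/2); last by rewrite /e; field_char0.
apply: (mulIf (mulf_neq0 poch_pb_neq0 poch_nb_neq0)).
transitivity ((-1) ^+ j * 'C(N, j)%:R * poch (A N) j * poch (- k%:R) j *
  (4 ^+ N * (poch (u + b/2) (N - j) * poch (u - b/2) (N - j)) *
   (poch (1/2 + b) k * poch (1/2 - b) k))); first by ring.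
rewrite (poch_quarter_identity b le_jN le_jk) -poch_oppn_fact.
by field; rewrite poch_pb_neq0 poch_nb_neq0 natf_neq0 fact_gt0.
Qed.


Lemma cleared3F2_Q3 N :
  4 ^+ N * cleared3F2 N (A N) (A N + 1/2) c d =
  poch (1/2 - k%:R - b) N * poch (1/2 - k%:R + b) N * Q3 k N a b.
Proof.
rewrite cleared3F2_sheppard.
rewrite (_ : A N + (A N + 1/2) - N%:R - c - d + 1 = - k%:R); last by field_char0.
rewrite /Q3 -(@big_ord_shrink _ (N + k).+1 N.+1 (fun j => (-1) ^+ j * 'C(N, j)%:R *
    (poch (A N) j * poch (- k%:R) j * poch (c - A N) (N - j) * poch (d - A N) (N - j))));
  last 2 first.
- lia.
- by move=> i /andP[lt_Ni _]; rewrite bin_small // mulr0 mul0r.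
rewrite -(@big_ord_shrink _ (N + k).+1 k.+1 (fun j =>
    poch (- N%:R) j * poch (A N) j * poch (- k%:R) j / j`!%:R *
      poch (1/4 - k%:R/2 + b/2 - N%:R/2 + j%:R) (k - j) *
      poch (1/4 - k%:R/2 - b/2 - N%:R/2 + j%:R) (k - j))); last 2 first.
- lia.
- by move=> i /andP[lt_ki _]; rewrite (poch_oppn k) ffact_small //; ring.
by rewrite !big_distrr; apply: eq_bigr => j _; apply: Q3_summand.
Qed.


Lemma F32_Xbinom_summand N m : (m <= N)%N ->
  F32 (a/3) (1/3 + a/3) (2/3 + a/3) c d m * (-27) ^+ m *
    fps_binom (m%:R * -3 - a) 4 (N - m)%N =
  poch a N * 4 ^+ N / (N`!%:R * poch c N * poch d N) *
  ((-1) ^+ m * 'C(N, m)%:R *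
   (poch (A N) m * poch (A N + 1/2) m * poch (c + m%:R) (N - m) * poch (d + m%:R) (N - m))).
Proof.
move=> le_mN.
have poch_neq0_shift (x : F) (l n : nat) : (forall i, x + i%:R != 0) -> poch (x + l%:R) n != 0.
  by move=> x_neq; apply: poch_neq0 => i _; rewrite -addrA -natrD.
have c_m := poch_neq0_shift _ 0 m c_neq_natN; rewrite addr0 in c_m.
have d_m := poch_neq0_shift _ 0 m d_neq_natN; rewrite addr0 in d_m.
have c_Nm := poch_neq0_shift _ m (N - m)%N c_neq_natN.
have d_Nm := poch_neq0_shift _ m (N - m)%N d_neq_natN.
set P3 := poch (a/3) m * poch (1/3 + a/3) m * poch (2/3 + a/3) m.
have tripl_dupl : poch a N * (4 ^+ m * (poch (A N) m * poch (A N + 1/2) m)) =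
    27 ^+ m * P3 * poch (a + (3 * m)%:R) (N - m).
  rewrite (_ : A N = (a + N%:R) / 2); last by field_char0.
  rewrite (_ : (a + N%:R) / 2 + 1/2 = (a + N%:R + 1) / 2); last by field_char0.
  rewrite poch_duplication -poch_add /P3 poch_triplication -poch_add.
  by congr poch; lia.
have poch_c : poch c N = poch c m * poch (c + m%:R) (N - m) by rewrite -poch_add subnKC.
have poch_d : poch d N = poch d m * poch (d + m%:R) (N - m) by rewrite -poch_add subnKC.
have pow4 : 4 ^+ N = 4 ^+ m * 4 ^+ (N - m) :> F by rewrite -exprD subnKC.
rewrite poch_c poch_d pow4.
transitivity (poch a N * (4 ^+ m * (poch (A N) m * poch (A N + 1/2) m)) * 4 ^+ (N - m) *
  ('C(N, m)%:R / N`!%:R) * (-1) ^+ m / (poch c m * poch d m)); last first.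
  by field; rewrite c_m d_m c_Nm d_Nm natf_neq0 fact_gt0.
rewrite tripl_dupl bin_div_fact // /F32 /fps_binom.
rewrite (_ : (-27) ^+ m = (-1) ^+ m * 27 ^+ m); last by rewrite -exprMn mulN1r.
rewrite (_ : - (m%:R * -3 - a) = a + (3 * m)%:R); last by rewrite natrM; ring.
by rewrite /P3; field; rewrite ?c_m ?d_m ?natf_neq0 ?fact_gt0.
Qed.

Lemma Q3_series_coef N :
  poch a N * poch (1/2 - k%:R - b) N * poch (1/2 - k%:R + b) N /
    (N`!%:R * poch c N * poch d N) * Q3 k N a b =
  \sum_(m < N.+1) F32 (a/3) (1/3 + a/3) (2/3 + a/3) c d m * (-27) ^+ m *
    fps_binom (m%:R * -3 - a) 4 (N - m)%N.
Proof.
under eq_bigr => m _ do rewrite (@F32_Xbinom_summand N m (ltn_ord m)).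
rewrite -big_distrr /= -/(cleared3F2 N (A N) (A N + 1/2) c d).
transitivity (poch a N / (N`!%:R * poch c N * poch d N) *
  (poch (1/2 - k%:R - b) N * poch (1/2 - k%:R + b) N * Q3 k N a b)); first by ring.
by rewrite -cleared3F2_Q3; ring.
Qed.

End Q3Coefficients.
End Hypergeometric.

Unset Implicit Arguments.

Theorem theorem2 (F : fieldType) (char0 : [pchar F] =i pred0)
    (k : nat) (a b : F)
    (hb : forall j : nat, (j < k)%N ->
            b != 1/2 + j%:R /\ b != - (1/2 + j%:R))
    (hlow1 : forall m : nat, 3/4 + k%:R/2 + a/2 + b/2 != - m%:R)
    (hlow2 : forall m : nat, 3/4 + k%:R/2 + a/2 - b/2 != - m%:R) :
  fps_comp
    (F32 (a/3) (1/3 + a/3) (2/3 + a/3)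
         (3/4 + k%:R/2 + a/2 + b/2) (3/4 + k%:R/2 + a/2 - b/2))
    (fps_mul (fps_X (- 27)) (fps_binom (-3) 4))
  =
  fps_mul (fps_binom a 4)
    (fun n => poch a n * poch (1/2 - k%:R - b) n * poch (1/2 - k%:R + b) n /
              ((n`!)%:R * poch (3/4 + k%:R/2 + a/2 + b/2) n
                        * poch (3/4 + k%:R/2 + a/2 - b/2) n)
              * Q3 k n a b).
Proof.
have poch_pb_neq0 : poch (1/2 + b) k != 0.
  apply: poch_neq0 => i /hb[_ b_neq].
  by rewrite (_ : 1/2 + b + i%:R = b - - (1/2 + i%:R)) ?subr_eq0 //; ring.
have poch_nb_neq0 : poch (1/2 - b) k != 0.
  apply: poch_neq0 => i /hb[b_neq _].
  by rewrite (_ : 1/2 - b + i%:R = (1/2 + i%:R) - b) ?subr_eq0 1?eq_sym //; ring.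
have c_neq_natN i : 3/4 + k%:R/2 + a/2 + b/2 + i%:R != 0 by rewrite addr_eq0.
have d_neq_natN i : 3/4 + k%:R/2 + a/2 - b/2 + i%:R != 0 by rewrite addr_eq0.
apply: (fps_comp_Xbinom char0) => N.
exact: (Q3_series_coef char0 poch_pb_neq0 poch_nb_neq0 c_neq_natN d_neq_natN).
Qed.
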